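(* Let $G=\langle A\cup B\rangle$ be a CS group with periodic rooted group $A$, and assume that either (i) $A$ has finite exponent, or (ii) the directed group $B$ has finite support. Let $T\subseteq G$ be a set of elements of finite order. Suppose that for every $g\in G\setminus A$ there is some $m\in\mathbb N$ such that for all $v\in X^m$ (for which $\ell_g(v)$ is then finite) we have $\mathrm{syl}(g\|_v)<\mathrm{syl}(g)$ or $g\|_v\in T$. Then $G$ is periodic.
   Context: Let $X$ be a nonempty set (possibly infinite) with a distinguished letter $0\in X$, and $\dot X=X\setminus\{0\}$. $X^*$ is the free monoid on $X$ (concatenation $u\star v$), viewed as a regular rooted tree with layers $X^n$. $\mathrm{Aut}(X^* )$ is the group of root-fixing tree automorphisms, acting on the right ($gh$ = first $g$ then $h$); ${}^hg=hgh^{-1}$. The section $g|_u$ is defined by $(u\star v).g=u.g\star v.(g|_u)$; elements of $\mathrm{Sym}(X)$ are identified with rooted automorphisms $(x\star v).\rho=x.\rho\star v$; $\mathrm{St}(1)$ is the stabiliser of all vertices of $X^1$. For a vertex $v$, $\ell_g(v)$ is the length of its $\langle g\rangle$-orbit; if finite, $g\|_v:=g^{\ell_g(v)}|_v$. A constant spinal (CS) group is $G=\langle A\cup B\rangle$ with $A\le\mathrm{Sym}(X)$ transitive (rooted group) and $B\le\mathrm{St}(1)$ (directed group) such that $b|_0=b$ for all $b\in B$ and the elements $b|_x$ ($b\in B$, $x\in\dot X$) lie in $A$ and generate $A$. $B$ has finite support if each $b\in B$ has $b|_x=\mathrm{id}$ for all but finitely many $x$. Every $g\in G$ is a product $({}^{a_0}b_0)\cdots({}^{a_{n-1}}b_{n-1})a_n$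 ($a_i\in A$, $b_i\in B$); $\mathrm{syl}(g)$ is the least such $n$. A group is periodic if every element has finite order. *)

From Stdlib Require List.
From mathcomp Require Import all_boot.
Set Implicit Arguments. Unset Strict Implicit. Unset Printing Implicit Defensive.

Section Tree.
Variable X : Type.

Definition word := seq X.
Definition tmap := word -> word.

(* Right action convention: [comp f g] = "first f, then g" (i.e. fg). *)
Definition comp {T : Type} (f g : T -> T) : T -> T := fun x => g (f x).

Fixpoint gpow {T : Type} (f : T -> T) (n : nat) : T -> T :=
  match n with 0 => id | n'.+1 => comp (gpow f n') f end.

(* root-fixing tree automorphism of X^* : a bijection preserving lengths
   and the prefix order *)
Definition isAut (f : tmap) : Prop :=
  bijective f /\ (forall u, size (f u) = size u) /\
  (forall u v, take (size u) (f (u ++ v)) = f u).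

(* the section g|_u, defined by (u * v).g = u.g * v.(g|_u) *)
Definition section (g : tmap) (u : word) : tmap :=
  fun v => drop (size u) (g (u ++ v)).

Definition rooted (rho : X -> X) : tmap :=
  fun w => match w with [::] => [::] | x :: v => rho x :: v end.

Inductive gen {T : Type} (S : (T -> T) -> Prop) : (T -> T) -> Prop :=
| gen_S f : S f -> gen S f
| gen_id : gen S id
| gen_comp f g : gen S f -> gen S g -> gen S (comp f g)
| gen_inv f h : gen S f -> cancel f h -> cancel h f -> gen S h.

Definition is_subgroup {T : Type} (S : (T -> T) -> Prop) : Prop :=
  (forall f, S f -> bijective f) /\ S id /\
  (forall f g, S f -> S g -> S (comp f g)) /\
  (forall f, S f -> exists h, S h /\ cancel f h /\ cancel h f).

Definition isCS (x0 : X) (A : (X -> X) -> Prop) (B : tmap -> Prop) : Prop :=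
  is_subgroup A /\
  (forall x y, exists rho, A rho /\ rho x = y) /\
  is_subgroup B /\
  (forall b, B b -> isAut b /\ forall x, b [:: x] = [:: x]) /\
  (forall b, B b -> section b [:: x0] = b) /\
  (forall b x, B b -> x <> x0 -> exists rho, A rho /\ section b [:: x] = rooted rho) /\
  (forall rho, A rho <->
     gen (fun r => exists b x, B b /\ x <> x0 /\ section b [:: x] = rooted r) rho).

Definition CSgroup (A : (X -> X) -> Prop) (B : tmap -> Prop) : tmap -> Prop :=
  gen (fun g => (exists rho, A rho /\ g = rooted rho) \/ B g).

Definition inA (A : (X -> X) -> Prop) (g : tmap) : Prop :=
  exists rho, A rho /\ g = rooted rho.

(* g = (^{a_0}b_0) ... (^{a_{n-1}}b_{n-1}) a_n, with ^h g = h g h^{-1} *)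
Fixpoint syl_prod (l : seq ((X -> X) * (X -> X) * tmap)) (an : X -> X) : tmap :=
  match l with
  | [::] => rooted an
  | (a, a', b) :: l' =>
      comp (comp (comp (rooted a) b) (rooted a')) (syl_prod l' an)
  end.

Definition has_syl_decomp (A : (X -> X) -> Prop) (B : tmap -> Prop)
    (g : tmap) (n : nat) : Prop :=
  exists (l : seq ((X -> X) * (X -> X) * tmap)) (an : X -> X),
    size l = n /\ A an /\
    (forall a a' b, List.In (a, a', b) l ->
       A a /\ A a' /\ cancel a a' /\ cancel a' a /\ B b) /\
    g = syl_prod l an.

Definition is_syl (A : (X -> X) -> Prop) (B : tmap -> Prop) (g : tmap) (n : nat) : Prop :=
  has_syl_decomp A B g n /\ (forall k, has_syl_decomp A B g k -> n <= k).

Definition finite_order {T : Type} (f : T -> T) : Prop :=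
  exists n, 0 < n /\ gpow f n = id.

Definition orbit_len (g : tmap) (v : word) (l : nat) : Prop :=
  0 < l /\ gpow g l v = v /\ (forall k, 0 < k < l -> gpow g k v <> v).

Definition orbit_section (g : tmap) (v : word) (l : nat) : tmap :=
  section (gpow g l) v.

Definition periodic {T : Type} (S : (T -> T) -> Prop) : Prop :=
  forall f, S f -> finite_order f.

Definition finite_exponent {T : Type} (S : (T -> T) -> Prop) : Prop :=
  exists n, 0 < n /\ forall f, S f -> gpow f n = id.

Definition finite_support (B : tmap -> Prop) : Prop :=
  forall b, B b -> exists s : list X,
    forall x, section b [:: x] <> id -> List.In x s.

End Tree.

From Pilot Require Import Defs.
From Stdlib Require List.
From mathcomp Require Import all_boot.
From Stdlib Require Import FunctionalExtensionality Classical.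
Set Implicit Arguments. Unset Strict Implicit. Unset Printing Implicit Defensive.

(* Since A is periodic, under (i) or (ii) every g in G has a power g^N fixing
   a given level X^m pointwise, and the sections of g^N at the vertices v of
   X^m are powers of the orbit sections g||_v.  Only finitely many of these
   sections need to be controlled: under (i) all but finitely many lie in A,
   which has finite exponent; under (ii) there are only finitely many of them.
   So g has finite order as soon as all its orbit sections at some level do.
   For g outside A the hypothesis provides such a level whose orbit sections
   have fewer syllables or lie in T, and we conclude by well-founded induction
   on syl. *)

Local Notation cmp := Defs.comp.

Lemma ex_least (P : nat -> Prop) :
  (exists n, P n) -> exists n, P n /\ forall k, k < n -> ~ P k.
Proof.
move=> [n Pn]; elim/ltn_ind: n Pn => n IH Pn.
have [[k [lt_kn Pk]]|no_smaller] := classic (exists k, k < n /\ P k).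
  exact: IH lt_kn Pk.
by exists n; split=> // k lt_kn Pk; apply: no_smaller; exists k.
Qed.

Lemma common_period (U : Type) (L : seq U) (P : U -> Prop) (Q : U -> nat -> Prop) :
  (forall s n k, Q s n -> Q s (n * k)) ->
  (forall s, List.In s L -> P s -> exists2 n, 0 < n & Q s n) ->
  exists2 n, 0 < n & forall s, List.In s L -> P s -> Q s n.
Proof.
move=> QM; elim: L => [|s L IH] periods; first by exists 1.
have [n n_gt0 Ln] : exists2 n, 0 < n & forall t, List.In t L -> P t -> Q t n.
  by apply: IH => t Lt; apply: periods; right.
have [Ps|nPs] := classic (P s); last first.
  by exists n => // t [<-|Lt] //; exact: Ln.
have [k k_gt0 Qsk] := periods s (or_introl erefl) Ps.
exists (k * n); first by rewrite muln_gt0 k_gt0.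
move=> t [<-|Lt] Pt; first exact: QM.
by rewrite mulnC; apply/QM/Ln.
Qed.

Section SelfMaps.
Variable T : Type.
Implicit Types f g s t : T -> T.

Lemma gpowS f n : gpow f n.+1 = cmp (gpow f n) f.
Proof. by []. Qed.

Lemma gpowD f m n : gpow f (m + n) = cmp (gpow f m) (gpow f n).
Proof.
elim: n => [|n IH]; first by rewrite addn0; apply: functional_extensionality.
by rewrite addnS gpowS IH.
Qed.

Lemma gpowM f m n : gpow f (m * n) = gpow (gpow f m) n.
Proof. by elim: n => [|n IH]; rewrite ?muln0 // mulnSr gpowD IH. Qed.

Lemma gpow_fix f v n : f v = v -> gpow f n v = v.
Proof. by move=> fv; elim: n => //= n IH; rewrite /Defs.comp IH fv. Qed.

Lemma gpow_id n : gpow (@id T) n = id.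
Proof. by elim: n => //= n ->. Qed.

Lemma finite_order_gpow f n : finite_order f -> finite_order (gpow f n).
Proof.
move=> [k [k_gt0 fk]]; exists k; split=> //.
by rewrite -gpowM mulnC gpowM fk gpow_id.
Qed.

Lemma inverse_unique s t t' : cancel s t -> cancel t' s -> t = t'.
Proof. by move=> sK t'K; apply: functional_extensionality => x; rewrite -{1}(t'K x) sK. Qed.

Lemma seq_of_inverses (L : seq (T -> T)) : exists L', forall s t,
  List.In s L -> cancel s t -> cancel t s -> List.In t L'.
Proof.
elim: L => [|s L [L' L'P]]; first by exists [::].
have [[t [sK tK]]|no_inv] := classic (exists t, cancel s t /\ cancel t s).
  exists (t :: L') => s' t' [<-|Ls'] s'K t'K; last by right; exact: L'P s'K t'K.
  by left; exact: inverse_unique sK t'K.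
exists L' => s' t' [<-|Ls'] s'K t'K; last exact: L'P s'K t'K.
by case: no_inv; exists t'.
Qed.

Lemma seq_of_products (L1 L2 : seq (T -> T)) : exists L, forall s t,
  List.In s L1 -> List.In t L2 -> List.In (cmp s t) L.
Proof.
elim: L1 => [|s L1 [L L_P]]; first by exists [::].
exists (map (cmp s) L2 ++ L) => s' t [<-|Ls'] L2t; apply: List.in_or_app.
  by left; exact: List.in_map.
by right; exact: L_P.
Qed.

End SelfMaps.

Section Automorphisms.
Variable X : Type.
Local Notation tm := (seq X -> seq X).
Implicit Types f g h : tm.

Lemma aut_size f u : isAut f -> size (f u) = size u.
Proof. by case=> _ []. Qed.

Lemma aut_take f u w : isAut f -> take (size u) (f (u ++ w)) = f u.
Proof. by case=> _ []. Qed.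

Lemma aut_cat f u w : isAut f -> f (u ++ w) = f u ++ section f u w.
Proof.
by move=> Af; rewrite /section -{1}(cat_take_drop (size u) (f (u ++ w))) aut_take.
Qed.

Lemma aut_nil f : isAut f -> f [::] = [::].
Proof. by move=> Af; apply: size0nil; rewrite aut_size. Qed.

Lemma section_nil f : section f [::] = f.
Proof. by apply: functional_extensionality => w; rewrite /section drop0. Qed.

Lemma section_cat f u w : section f (u ++ w) = section (section f u) w.
Proof.
apply: functional_extensionality => z.
by rewrite /section drop_drop -catA size_cat addnC.
Qed.

Lemma section_cons f x w : section f (x :: w) = section (section f [:: x]) w.
Proof. exact: (section_cat f [:: x] w). Qed.

Lemma section_id u : section (@id (seq X)) u = id.
Proof. by apply: functional_extensionality => z; rewrite /section drop_size_cat. Qed.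

Lemma section_comp f g u : isAut f -> isAut g ->
  section (cmp f g) u = cmp (section f u) (section g (f u)).
Proof.
move=> Af Ag; apply: functional_extensionality => w.
rewrite /Defs.comp {1}/section (aut_cat u w Af) (aut_cat (f u) _ Ag) drop_size_cat //.
by rewrite !aut_size.
Qed.

Lemma isAut_id : isAut (@id (seq X)).
Proof. by split; [exists id | split=> // u v; rewrite take_size_cat]. Qed.

Lemma isAut_comp f g : isAut f -> isAut g -> isAut (cmp f g).
Proof.
move=> Af Ag; split; first by case: Af => bf _; case: Ag => bg _; exact: bij_comp bg bf.
split=> [u|u v]; first by rewrite /Defs.comp !aut_size.
by rewrite /Defs.comp (aut_cat u v Af) -(aut_size u Af) aut_take.
Qed.

Lemma isAut_inv f h : isAut f -> cancel f h -> cancel h f -> isAut h.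
Proof.
move=> Af fK hK.
have h_size u : size (h u) = size u by rewrite -{2}(hK u) (aut_size _ Af).
split; first by exists f.
split=> // u v; set y := h (u ++ v).
have size_take_y : size (take (size u) y) = size u.
  by rewrite size_takel // h_size size_cat leq_addr.
have f_take_y : f (take (size u) y) = u.
  have := hK (u ++ v); rewrite -/y -{1}(cat_take_drop (size u) y) (aut_cat _ _ Af) => fy.
  have := congr1 (take (size u)) fy.
  by rewrite take_size_cat ?(aut_size _ Af) // take_size_cat.
by rewrite -{2}f_take_y fK.
Qed.

Lemma isAut_gpow f n : isAut f -> isAut (gpow f n).
Proof. by move=> Af; elim: n => [|n IH]; [exact: isAut_id | exact: isAut_comp]. Qed.

Lemma section_gpow f u n : isAut f -> f u = u ->
  section (gpow f n) u = gpow (section f u) n.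
Proof.
move=> Af fu; elim: n => [|n IH]; first exact: section_id.
by rewrite gpowS section_comp ?IH ?gpow_fix //; exact: isAut_gpow.
Qed.

Lemma gpow_cat f u w n : isAut f -> f u = u ->
  gpow f n (u ++ w) = u ++ gpow (section f u) n w.
Proof.
by move=> Af fu; rewrite (aut_cat _ _ (isAut_gpow n Af)) gpow_fix // section_gpow.
Qed.

Lemma gpow_cons_fixed h k n x w : isAut h -> gpow h k [:: x] = [:: x] ->
  gpow h (k * n) (x :: w) = x :: gpow (section (gpow h k) [:: x]) n w.
Proof. by move=> Ah hkx; rewrite gpowM (gpow_cat w n (isAut_gpow k Ah) hkx). Qed.

Lemma gpow_level1 h (a : X -> X) n x : (forall y, h [:: y] = [:: a y]) ->
  gpow h n [:: x] = [:: gpow a n x].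
Proof. by move=> ha; elim: n x => //= n IH x; rewrite /Defs.comp IH ha. Qed.

Lemma section_cancel f h u : isAut f -> isAut h -> cancel f h ->
  cancel (section f u) (section h (f u)).
Proof.
move=> Af Ah fK w.
have fh_id : cmp f h = id by apply: functional_extensionality => z; exact: fK.
by have := congr1 (fun F => F w) (section_comp u Af Ah); rewrite fh_id section_id.
Qed.

(* [x0] only witnesses that X is nonempty: shorter words are padded to
   length m. *)
Lemma aut_id_of_level (x0 : X) h m : isAut h ->
  (forall v, size v = m -> h v = v /\ section h v = id) -> h = id.
Proof.
move=> Ah hm; apply: functional_extensionality => z.
have [le_mz|lt_zm] := leqP m (size z).
  have [hv hv_id] := hm (take m z) (size_takel le_mz).
  by rewrite -(cat_take_drop m z) (aut_cat _ _ Ah) hv hv_id.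
set pad := nseq (m - size z) x0.
have size_pad : size (z ++ pad) = m by rewrite size_cat size_nseq subnKC // ltnW.
by rewrite -(aut_take z pad Ah) (hm _ size_pad).1 take_size_cat.
Qed.

Lemma orbit_len_dvd g v N : 0 < N -> gpow g N v = v ->
  exists2 l, orbit_len g v l & l %| N.
Proof.
move=> N_gt0 gNv.
have [l [[l_gt0 glv] l_min]] := ex_least (ex_intro (fun n => 0 < n /\ gpow g n v = v)
                                                   N (conj N_gt0 gNv)).
exists l.
  by do 2!split=> //; move=> k /andP[k_gt0 lt_kl] gkv; exact: l_min k lt_kl (conj k_gt0 gkv).
have [/eqP//|r_gt0] := posnP (N %% l).
case: (l_min _ (ltn_pmod N l_gt0)); split=> //.
move: gNv; rewrite {1}(divn_eq N l) gpowD /Defs.comp mulnC gpowM.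
by rewrite (gpow_fix _ glv).
Qed.

Lemma section_gpow_orbit g v l N : isAut g -> orbit_len g v l -> l %| N ->
  section (gpow g N) v = gpow (orbit_section g v l) (N %/ l).
Proof.
move=> Ag [_ [glv _]] /divnK Nl.
by rewrite -{1}Nl mulnC gpowM section_gpow //; exact: isAut_gpow.
Qed.

Lemma finite_order_section_gpow g v N : isAut g -> 0 < N -> gpow g N v = v ->
  (forall l, orbit_len g v l -> finite_order (orbit_section g v l)) ->
  finite_order (section (gpow g N) v).
Proof.
move=> Ag N_gt0 gNv fo; have [l gvl dvd_lN] := orbit_len_dvd N_gt0 gNv.
by rewrite (section_gpow_orbit Ag gvl dvd_lN); apply/finite_order_gpow/fo.
Qed.

Lemma rooted_id : rooted (@id X) = id.
Proof. by apply: functional_extensionality => -[]. Qed.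

Lemma rooted_comp (a b : X -> X) : cmp (rooted a) (rooted b) = rooted (cmp a b).
Proof. by apply: functional_extensionality => -[]. Qed.

Lemma gpow_rooted (a : X -> X) n : gpow (rooted a) n = rooted (gpow a n).
Proof. by elim: n => [|n IH]; rewrite ?rooted_id // gpowS IH rooted_comp. Qed.

Lemma section_rooted (a : X -> X) x w : section (rooted a) (x :: w) = id.
Proof. by apply: functional_extensionality => z; rewrite /section /= drop_size_cat. Qed.

Lemma rooted_cancel (a b : X -> X) : cancel a b -> cancel (rooted a) (rooted b).
Proof. by move=> aK [|x w] //=; rewrite aK. Qed.

Lemma isAut_rooted (a : X -> X) : bijective a -> isAut (rooted a).
Proof.
case=> b aK bK; split; first by exists (rooted b); apply: rooted_cancel.
by split=> [[|x w]|[|x u] v] //=; rewrite ?take0 ?take_size_cat.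
Qed.

Lemma finite_order_rooted (a : X -> X) : finite_order a -> finite_order (rooted a).
Proof. by case=> k [k_gt0 ak]; exists k; rewrite gpow_rooted ak rooted_id. Qed.

Definition finitely_many_sections h m :=
  exists L : seq tm, forall v, size v = m -> List.In (section h v) L.

Lemma finitely_many_sections_id m : finitely_many_sections id m.
Proof. by exists [:: id] => v _; rewrite section_id; left. Qed.

Lemma finitely_many_sections_rooted (a : X -> X) m : finitely_many_sections (rooted a) m.
Proof.
exists [:: rooted a; id] => -[|x w] _; first by left; rewrite section_nil.
by right; left; rewrite section_rooted.
Qed.

Lemma finitely_many_sections_comp f g m : isAut f -> isAut g ->
  finitely_many_sections f m -> finitely_many_sections g m ->
  finitely_many_sections (cmp f g) m.
Proof.
move=> Af Ag [Lf Lf_P] [Lg Lg_P]; have [L L_P] := seq_of_products Lf Lg.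
exists L => v vm; rewrite section_comp //; apply: L_P; first exact: Lf_P.
by apply: Lg_P; rewrite aut_size.
Qed.

Lemma finitely_many_sections_inv f h m : isAut f -> cancel f h -> cancel h f ->
  finitely_many_sections f m -> finitely_many_sections h m.
Proof.
move=> Af fK hK [Lf Lf_P]; have Ah := isAut_inv Af fK hK.
have [L L_P] := seq_of_inverses Lf; exists L => v vm.
have := section_cancel (h v) Af Ah fK; rewrite hK => fhvK.
apply: (L_P (section f (h v))) fhvK (section_cancel v Ah Af hK).
by apply: Lf_P; rewrite aut_size.
Qed.

End Automorphisms.

Section SylLength.
Variables (X : Type) (A : (X -> X) -> Prop) (B : (seq X -> seq X) -> Prop).

Definition syl_lt (h g : seq X -> seq X) :=
  exists n1 n2, is_syl A B h n1 /\ is_syl A B g n2 /\ n1 < n2.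

Lemma is_syl_unique g n k : is_syl A B g n -> is_syl A B g k -> n = k.
Proof. by move=> [gn n_min] [gk k_min]; apply/eqP; rewrite eqn_leq n_min ?k_min. Qed.

(* Elements without any syllable decomposition are trivially accessible. *)
Lemma syl_lt_wf : well_founded syl_lt.
Proof.
suff acc_syl n g : is_syl A B g n -> Acc syl_lt g.
  by move=> g; apply: Acc_intro => h [n1 [_ [h_n1 _]]]; exact: acc_syl h_n1.
elim/ltn_ind: n g => n IH g g_n; apply: Acc_intro => h [n1 [n2 [h_n1 [g_n2 lt12]]]].
by apply: (IH n1) h_n1; rewrite (is_syl_unique g_n g_n2).
Qed.

End SylLength.

Section ConstantSpinal.
Variables (X : Type) (x0 : X) (A : (X -> X) -> Prop) (B : (seq X -> seq X) -> Prop).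
Hypothesis HCS : isCS x0 A B.
Local Notation tm := (seq X -> seq X).
Local Notation G := (CSgroup A B).
Implicit Types f g h : tm.

Lemma A_bij a : A a -> bijective a.
Proof. by case: HCS => [[]]; auto. Qed.

Lemma A_id : A id.
Proof. by case: HCS => [[_ []]]. Qed.

Lemma A_comp a b : A a -> A b -> A (cmp a b).
Proof. by case: HCS => [[_ [_ []]]]; auto. Qed.

Lemma A_inv a : A a -> exists b, A b /\ cancel a b /\ cancel b a.
Proof. by case: HCS => [[_ [_ [_]]]]; auto. Qed.

Lemma B_isAut b : B b -> isAut b.
Proof. by case: HCS => [_ [_ [_ [B_aut _]]]] /B_aut []. Qed.

Lemma B_fix_level1 b x : B b -> b [:: x] = [:: x].
Proof. by case: HCS => [_ [_ [_ [B_aut _]]]] /B_aut []. Qed.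

Lemma B_section_x0 b : B b -> section b [:: x0] = b.
Proof. by case: HCS => [_ [_ [_ [_ []]]]]; auto. Qed.

Lemma B_section_off_x0 b x : B b -> x <> x0 ->
  exists rho, A rho /\ section b [:: x] = rooted rho.
Proof. by case: HCS => [_ [_ [_ [_ [_ []]]]]]; auto. Qed.

Lemma inA_id : inA A id.
Proof. by exists id; rewrite rooted_id; split; first exact: A_id. Qed.

Lemma inA_comp f g : inA A f -> inA A g -> inA A (cmp f g).
Proof.
move=> [a [Aa ->]] [b [Ab ->]]; exists (cmp a b).
by rewrite rooted_comp; split; first exact: A_comp.
Qed.

Lemma B_section_spine_or_rooted b v : B b -> v = nseq (size v) x0 \/ inA A (section b v).
Proof.
move=> Bb; elim: v => [|x w IH]; first by left.
rewrite section_cons; have [->|x0x] := classic (x = x0).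
  by rewrite B_section_x0 //; case: IH => [{1}->|]; [left | right].
right; have [rho [Arho ->]] := B_section_off_x0 Bb x0x.
case: w {IH} => [|y w]; first by exists rho; rewrite section_nil.
by rewrite section_rooted; exact: inA_id.
Qed.

Lemma B_finitely_many_sections b m : finite_support B -> B b -> finitely_many_sections b m.
Proof.
move=> Bfs Bb; have [s s_supp] := Bfs b Bb.
exists [:: b, id & map (fun y => section b [:: y]) s] => v _.
elim: v => [|x w IH]; first by left; rewrite section_nil.
have [->|x0x] := classic (x = x0); first by rewrite section_cons B_section_x0.
case: w {IH} => [|y w]; last first.
  have [rho [_ bx]] := B_section_off_x0 Bb x0x.
  by right; left; rewrite section_cons bx section_rooted.
have [bx_id|bx_nid] := classic (section b [:: x] = id); first by right; left.
by right; right; apply: (List.in_map (fun y => section b [:: y])); exact: s_supp.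
Qed.

Definition acts_rooted h := exists2 a, A a & forall x, h [:: x] = [:: a x].

Definition almost_rooted_sections h m := exists Vs : seq (seq X),
  forall v, size v = m -> List.In v Vs \/ inA A (section h v).

Lemma almost_rooted_sections_comp f g m : isAut f -> isAut g ->
  almost_rooted_sections f m -> almost_rooted_sections g m ->
  almost_rooted_sections (cmp f g) m.
Proof.
move=> Af Ag [Vf Vf_P] [Vg Vg_P]; have [[finv fK _] _] := Af.
exists (Vf ++ map finv Vg) => v vm.
have [Vf_v|fvA] := Vf_P v vm; first by left; apply: List.in_or_app; left.
have [Vg_fv|gfvA] := Vg_P (f v) (etrans (aut_size _ Af) vm).
  by left; apply: List.in_or_app; right; rewrite -(fK v); exact: List.in_map.
by right; rewrite section_comp //; exact: inA_comp.
Qed.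

Lemma almost_rooted_sections_inv f h m : isAut f -> cancel f h -> cancel h f ->
  almost_rooted_sections f m -> almost_rooted_sections h m.
Proof.
move=> Af fK hK [Vf Vf_P]; have Ah := isAut_inv Af fK hK.
exists (map f Vf) => v vm.
have [Vf_hv|[a [Aa fhv]]] := Vf_P (h v) (etrans (aut_size _ Ah) vm).
  by left; rewrite -(hK v); exact: List.in_map.
right; have [a' [Aa' [_ a'K]]] := A_inv Aa; exists a'; split=> //.
have := section_cancel (h v) Af Ah fK; rewrite hK fhv => aK.
exact: inverse_unique aK (rooted_cancel a'K).
Qed.

Lemma G_isAut h : G h -> isAut h.
Proof.
elim=> [{}h [[a [Aa ->]]|/B_isAut //]| |f g _ Af _ Ag|f {}h _ Af fK hK].
- exact/isAut_rooted/A_bij.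
- exact: isAut_id.
- exact: isAut_comp.
- exact: isAut_inv Af fK hK.
Qed.

Lemma G_acts_rooted h : G h -> acts_rooted h.
Proof.
elim=> [{}h [[a [Aa ->]]|Bh]| |f g _ [a Aa fa] _ [b Ab gb]|f {}h _ [a Aa fa] fK _].
- by exists a.
- by exists id => [|x]; [exact: A_id | exact: B_fix_level1].
- by exists id => //; exact: A_id.
- by exists (cmp a b) => [|x]; [exact: A_comp | rewrite /Defs.comp fa gb].
- have [a' [Aa' [_ a'K]]] := A_inv Aa; exists a' => // x.
  by rewrite -{1}(a'K x) -fa fK.
Qed.

Lemma G_section1 h x : G h -> G (section h [:: x]).
Proof.
move=> Gh; elim: Gh x => [{}h [[a [Aa ->]]|Bh]| |f g Gf IHf Gg IHg|f {}h Gf IHf fK hK] x.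
- by rewrite section_rooted; exact: gen_id.
- have [->|x0x] := classic (x = x0); first by rewrite B_section_x0 //; apply: gen_S; right.
  have [rho [Arho ->]] := B_section_off_x0 Bh x0x.
  by apply: gen_S; left; exists rho.
- by rewrite section_id; exact: gen_id.
- have [a _ fa] := G_acts_rooted Gf.
  by rewrite section_comp ?fa; [exact: gen_comp (IHf x) (IHg (a x)) | exact: G_isAut..].
- have Af := G_isAut Gf; have Ah := isAut_inv Af fK hK.
  have [a _ ha] := G_acts_rooted (gen_inv Gf fK hK).
  have -> : [:: x] = f [:: a x] by rewrite -ha hK.
  apply: (gen_inv (IHf (a x))); first exact: section_cancel.
  by have := section_cancel (f [:: a x]) Ah Af hK; rewrite fK.
Qed.

Lemma G_section h v : G h -> G (section h v).
Proof.
elim: v h => [|x w IH] h Gh; first by rewrite section_nil.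
by rewrite section_cons; apply/IH/G_section1.
Qed.

Lemma G_gpow h n : G h -> G (gpow h n).
Proof. by move=> Gh; elim: n => [|n IH]; [exact: gen_id | exact: gen_comp]. Qed.

Lemma G_orbit_section g v l : G g -> G (orbit_section g v l).
Proof. by move=> Gg; apply/G_section/G_gpow. Qed.

Lemma G_almost_rooted_sections h m : G h -> almost_rooted_sections h m.
Proof.
elim=> [{}h [[a [Aa ->]]|Bh]| |f g Gf IHf Gg IHg|f {}h Gf IHf fK hK].
- exists [:: [::]] => -[|x w] _; first by left; left.
  by right; rewrite section_rooted; exact: inA_id.
- exists [:: nseq m x0] => v vm.
  have [v_spine|] := B_section_spine_or_rooted v Bh; last by right.
  by left; left; rewrite v_spine vm.
- by exists [::] => v _; right; rewrite section_id; exact: inA_id.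
- by apply: almost_rooted_sections_comp => //; exact: G_isAut.
- by apply: almost_rooted_sections_inv IHf; first exact: G_isAut.
Qed.

Lemma G_finitely_many_sections h m : finite_support B -> G h -> finitely_many_sections h m.
Proof.
move=> Bfs; elim=> [{}h [[a [Aa ->]]|Bh]| |f g Gf IHf Gg IHg|f {}h Gf IHf fK hK].
- exact: finitely_many_sections_rooted.
- exact: B_finitely_many_sections.
- exact: finitely_many_sections_id.
- by apply: finitely_many_sections_comp => //; exact: G_isAut.
- by apply: finitely_many_sections_inv IHf; first exact: G_isAut.
Qed.

Lemma G_level_stabilizer_exponent e m h : (forall a, A a -> gpow a e = id) -> G h ->
  forall v, size v = m -> gpow h (e ^ m) v = v.
Proof.
move=> Ae; elim: m h => [|m IH] h Gh v.
  by move/size0nil->; apply/gpow_fix/aut_nil/G_isAut.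
case: v => [|x w] //= [wm]; have [a Aa ha] := G_acts_rooted Gh.
have hex : gpow h e [:: x] = [:: x] by rewrite (gpow_level1 _ _ ha) Ae.
by rewrite expnS (gpow_cons_fixed _ _ (G_isAut Gh) hex) IH //; apply/G_section/G_gpow.
Qed.

Lemma G_level_stabilizer_support m h : periodic A -> finite_support B -> G h ->
  exists2 N, 0 < N & forall v, size v = m -> gpow h N v = v.
Proof.
move=> Aper Bfs; elim: m h => [|m IH] h Gh.
  by exists 1 => // v /size0nil->; apply/gpow_fix/aut_nil/G_isAut.
have [a Aa ha] := G_acts_rooted Gh; have [k [k_gt0 ak]] := Aper a Aa.
have hkx x : gpow h k [:: x] = [:: x] by rewrite (gpow_level1 _ _ ha) ak.
have [L L_P] := G_finitely_many_sections 1 Bfs (G_gpow k Gh).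
case: (common_period (L := L) (P := G)
         (Q := fun s N => forall w, size w = m -> gpow s N w = w))
  => [s n j sn w wm|s _ Gs|N N_gt0 L_N]; [by rewrite gpowM gpow_fix // sn | exact: IH |].
exists (k * N) => [|[|x w] //= [wm]]; first by rewrite muln_gt0 k_gt0.
rewrite (gpow_cons_fixed _ _ (G_isAut Gh) (hkx x)) L_N //; first exact: L_P.
by apply/G_section/G_gpow.
Qed.

Lemma G_level_stabilizer m h : periodic A -> finite_exponent A \/ finite_support B ->
  G h -> exists2 N, 0 < N & forall v, size v = m -> gpow h N v = v.
Proof.
move=> Aper [[e [e_gt0 Ae]] Gh|Bfs]; last exact: G_level_stabilizer_support.
by exists (e ^ m); [rewrite expn_gt0 e_gt0 | exact: G_level_stabilizer_exponent].
Qed.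

Lemma G_uniform_section_period h m : finite_exponent A \/ finite_support B -> G h ->
  (forall v, size v = m -> finite_order (section h v)) ->
  exists2 M, 0 < M & forall v, size v = m -> gpow (section h v) M = id.
Proof.
move=> [[e [e_gt0 Ae]]|Bfs] Gh fo.
  have [Vs Vs_P] := G_almost_rooted_sections m Gh.
  case: (common_period (L := Vs) (P := fun v => size v = m)
           (Q := fun v n => gpow (section h v) n = id))
    => [v n k vn|v _ vm|M M_gt0 Vs_M]; first by rewrite gpowM vn gpow_id.
    by have [n [n_gt0 hvn]] := fo v vm; exists n.
  exists (M * e) => [|v vm]; first by rewrite muln_gt0 M_gt0.
  have [Vs_v|[a [Aa ->]]] := Vs_P v vm; first by rewrite gpowM Vs_M // gpow_id.
  by rewrite mulnC gpowM gpow_rooted Ae // rooted_id gpow_id.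
have [L L_P] := G_finitely_many_sections m Bfs Gh.
case: (common_period (L := L) (P := fun s => exists2 v, size v = m & section h v = s)
         (Q := fun s n => gpow s n = id))
  => [s n k sn|s _ [v vm <-]|M M_gt0 L_M]; first by rewrite gpowM sn gpow_id.
  by have [n [n_gt0 hvn]] := fo v vm; exists n.
by exists M => // v vm; apply: L_M; [exact: L_P | exists v].
Qed.

Lemma G_finite_order_of_orbit_sections g : periodic A ->
  finite_exponent A \/ finite_support B -> G g ->
  (exists m, forall v l, size v = m -> orbit_len g v l ->
     finite_order (orbit_section g v l)) ->
  finite_order g.
Proof.
move=> Aper Acase Gg [m fo]; have Ag := G_isAut Gg.
have [N N_gt0 gN] := G_level_stabilizer m Aper Acase Gg.
have [M M_gt0 gNM] := G_uniform_section_period Acase (G_gpow N Gg)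
  (fun v vm => finite_order_section_gpow Ag N_gt0 (gN v vm) (fun l => fo v l vm)).
exists (N * M); split; first by rewrite muln_gt0 N_gt0.
rewrite gpowM; apply: (aut_id_of_level x0 (m := m) (isAut_gpow M (isAut_gpow N Ag))) => v vm.
split; first exact: gpow_fix (gN v vm).
by rewrite section_gpow ?(gNM v vm) ?(gN v vm) //; exact: isAut_gpow.
Qed.

End ConstantSpinal.

Theorem mainTheorem5 (X : Type) (x0 : X) (A : (X -> X) -> Prop)
  (B : (seq X -> seq X) -> Prop) (T : (seq X -> seq X) -> Prop) :
  isCS x0 A B ->
  periodic A ->
  (finite_exponent A \/ finite_support B) ->
  (forall t, T t -> CSgroup A B t /\ finite_order t) ->
  (forall g, CSgroup A B g -> ~ inA A g ->
     exists m : nat, forall (v : seq X) (l : nat), size v = m -> orbit_len g v l ->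
       (exists n1 n2, is_syl A B (orbit_section g v l) n1 /\ is_syl A B g n2 /\ n1 < n2)
       \/ T (orbit_section g v l)) ->
  periodic (CSgroup A B).
Proof.
move=> HCS Aper Acase T_fo reduce g.
elim/(well_founded_ind (syl_lt_wf A B)): g => g IH Gg.
have [[rho [Arho ->]]|gA] := classic (inA A g); first exact/finite_order_rooted/Aper.
apply: (G_finite_order_of_orbit_sections HCS Aper Acase Gg).
have [m red] := reduce g Gg gA; exists m => v l vm gvl.
have [lt_syl|Tv] := red v l vm gvl; last by case: (T_fo _ Tv).
by apply: (IH _ lt_syl); exact: (G_orbit_section HCS v l Gg).
Qed.
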